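(* If an undirected graph $\mathcal G$ can be represented with a set of $t$ types, then $\nu(\mathcal G)\le t/3$.
   Context: An undirected graph $\mathcal G=(V,E)$ can be represented by a set of types $T$ if there is a map $f:V\to T$ such that for any $t_1,t_2\in T$, either every pair of distinct vertices $u,v$ with $f(u)=t_1$, $f(v)=t_2$ is an edge, or no such pair is an edge; moreover (standing convention) no edge joins two vertices of the same type. A set of odd cycles $\{c_1,\dots,c_l\}$ is independent if the cycles are pairwise vertex-disjoint and no edge joins a vertex of $c_i$ to a vertex of $c_j$ for $i\ne j$; $\nu(\mathcal G)$ is the maximum size of an independent set of odd cycles of $\mathcal G$. *)

From mathcomp Require Import all_boot.
Set Implicit Arguments. Unset Strict Implicit. Unset Printing Implicit Defensive.

Definition simple_graph (V : finType) (e : rel V) : Prop :=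
  symmetric e /\ irreflexive e.

Definition represents (V T : finType) (e : rel V) (f : V -> T) : Prop :=
  (forall t1 t2 : T,
     (forall u v : V, u != v -> f u = t1 -> f v = t2 -> e u v) \/
     (forall u v : V, u != v -> f u = t1 -> f v = t2 -> ~~ e u v))
  /\ (forall u v : V, f u = f v -> ~~ e u v).

Definition odd_cycle (V : finType) (e : rel V) (c : seq V) : bool :=
  [&& uniq c, 3 <= size c, odd (size c) & cycle e c].

Definition independent_odd_cycles (V : finType) (e : rel V) (cs : seq (seq V)) : Prop :=
  (forall c, c \in cs -> odd_cycle e c) /\
  (forall i j, i < size cs -> j < size cs -> i != j ->
     forall u v, u \in nth [::] cs i -> v \in nth [::] cs j -> u != v /\ ~~ e u v).

From mathcomp Require Import all_boot.

Set Implicit Arguments.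
Unset Strict Implicit.
Unset Printing Implicit Defensive.

(* Vertices of one type are pairwise non-adjacent, so an odd cycle meets at
   least three types: with only two, it would be properly 2-coloured.  Two
   independent cycles share no type: if [u] in [c] and [v] in [c'] have the
   same type, the neighbour [w] of [u] on [c] is adjacent to [u], hence to
   every vertex of type [f u], in particular to [v].  So [nu(G)] cycles use
   at least [3 nu(G)] distinct types. *)

Lemma card_bigcup_disjoint (I T : finType) (F : I -> {set T}) :
  (forall i j, i != j -> [disjoint F i & F j]) ->
  #|\bigcup_i F i| = \sum_i #|F i|.
Proof.
move=> disjF; rewrite -sum1_card partition_disjoint_bigcup //.
by apply: eq_bigr => i _; rewrite sum1_card.
Qed.

Section OddCycles.

Variables (V : finType) (e : rel V).

Lemma path_alternating_colour (A : seq V) (g : V -> bool) :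
    {in A &, forall y z, e y z -> g z = ~~ g y} ->
  forall x p, x \in A -> all [in A] p -> path e x p ->
  g (last x p) = odd (size p) (+) g x.
Proof.
move=> gA x p; elim: p x => [|y p IHp] x //= xA /andP[yA pA] /andP[exy pP].
by rewrite (IHp y) // (gA x y) // addNb addbN.
Qed.

Lemma odd_cycle_not_bicoloured (c : seq V) (g : V -> bool) :
    odd (size c) -> cycle e c ->
  ~ {in c &, forall y z, e y z -> g z = ~~ g y}.
Proof.
case: c => [|x p] //= odd_c cyc gc.
have xc : x \in x :: p by rewrite mem_head.
have pc : all [in x :: p] (rcons p x).
  by rewrite all_rcons mem_head; apply/allP => y yp; rewrite inE yp orbT.
have := path_alternating_colour gc xc pc cyc.
by rewrite last_rcons size_rcons /= (negbTE odd_c) addNb; case: (g x).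
Qed.

Variables (T : finType) (f : V -> T).

Lemma odd_cycle_types_gt2 (c : seq V) :
    (forall u v, f u = f v -> ~~ e u v) -> odd (size c) -> cycle e c ->
  2 < #|f @: c|.
Proof.
case: c => [|x p] // types_indep odd_c cyc; rewrite ltnNge; apply/negP => le2.
apply: (odd_cycle_not_bicoloured (g := fun y => f y == f x) odd_c cyc).
move=> y z yc zc eyz; have fyz : f y != f z.
  by apply: contraTneq eyz => /types_indep.
have [fyx | fyx] := eqVneq (f y) (f x); first by rewrite -fyx eq_sym (negbTE fyz).
apply/eqP; apply: contraTeq le2 => fzx; rewrite -ltnNge.
apply/card_gt2P; exists (f y), (f z), (f x).
by rewrite !imset_f ?mem_head // fyz fzx eq_sym fyx.
Qed.

Lemma represents_edge_to_type (u v w : V) :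
  represents e f -> w != u -> e w u -> w != v -> f v = f u -> e w v.
Proof.
move=> [rep _] wu ewu wv fvu.
case: (rep (f w) (f u)) => [all_edges | no_edges]; first exact: all_edges.
by move: (no_edges w u wu erefl erefl); rewrite ewu.
Qed.

Lemma independent_cycle_types_disjoint (cs : seq (seq V)) i j :
    symmetric e -> irreflexive e -> represents e f ->
    independent_odd_cycles e cs ->
    i < size cs -> j < size cs -> i != j ->
  [disjoint f @: nth [::] cs i & f @: nth [::] cs j].
Proof.
move=> e_sym e_irr rep [odd_cs indep] ics jcs ij.
apply/pred0P => t /=; apply/negP => /andP[/imsetP[u uc ->] /imsetP[v vc fuv]].
have /and4P[_ _ _ cyc] : odd_cycle e (nth [::] cs i) by rewrite odd_cs ?mem_nth.
set w := next (nth [::] cs i) u.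
have euw : e u w by apply: next_cycle.
have wc : w \in nth [::] cs i by rewrite mem_next.
have [wv not_ewv] := indep i j ics jcs ij w v wc vc.
have wu : w != u by apply: contraTneq euw => ->; rewrite e_irr.
by move: not_ewv; rewrite (represents_edge_to_type rep wu _ wv (esym fuv)) // e_sym.
Qed.

End OddCycles.

Theorem mainTheorem7 (V T : finType) (e : rel V) (f : V -> T) :
  simple_graph e -> represents e f ->
  forall cs : seq (seq V), independent_odd_cycles e cs -> 3 * size cs <= #|T|.
Proof.
move=> [e_sym e_irr] rep cs ind.
pose F (i : 'I_(size cs)) := f @: nth [::] cs i.
have F_gt2 i : 2 < #|F i|.
  have /and4P[_ _ odd_c cyc] : odd_cycle e (nth [::] cs i).
    by rewrite ind.1 ?mem_nth.
  exact: odd_cycle_types_gt2 rep.2 odd_c cyc.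
have F_disj (i j : 'I_(size cs)) : i != j -> [disjoint F i & F j].
  by move=> ij; apply: independent_cycle_types_disjoint...
apply: leq_trans (max_card (\bigcup_i F i)).
rewrite card_bigcup_disjoint // -[X in 3 * X]card_ord mulnC -sum_nat_const.
exact: leq_sum.
Qed.
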